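(* Let $\mathbb{F}$ be an algebraically closed field with $\mathrm{char}\,\mathbb{F}=2$ and $n\ge1$. Then the algebra $T_n$ of trace ${\rm G}_2$-invariants is generated by $S_n$, and no proper subset of $S_n$ generates $T_n$.
   Context: The split octonion algebra $\mathbf{O}$ is the 8-dimensional $\mathbb{F}$-vector space of formal matrices $a=\begin{pmatrix}\alpha&\mathbf{u}\\ \mathbf{v}&\beta\end{pmatrix}$ with $\alpha,\beta\in\mathbb{F}$, $\mathbf{u},\mathbf{v}\in\mathbb{F}^3$, with multiplication $\begin{pmatrix}\alpha&\mathbf{u}\\ \mathbf{v}&\beta\end{pmatrix}\begin{pmatrix}\alpha'&\mathbf{u}'\\ \mathbf{v}'&\beta'\end{pmatrix}=\begin{pmatrix}\alpha\alpha'+\mathbf{u}\cdot\mathbf{v}'&\alpha\mathbf{u}'+\beta'\mathbf{u}-\mathbf{v}\times\mathbf{v}'\\ \alpha'\mathbf{v}+\beta\mathbf{v}'+\mathbf{u}\times\mathbf{u}'&\beta\beta'+\mathbf{v}\cdot\mathbf{u}'\end{pmatrix}$ (dot product and cross product on $\mathbb{F}^3$). Trace $\mathrm{tr}(a)=\alpha+\beta$, norm $n(a)=\alpha\beta-\mathbf{u}\cdot\mathbf{v}$. ${\rm G}_2=\mathrm{Aut}(\mathbf{O})$. $T_n$ is the subalgebra of the polynomial ring $\mathbb{F}[\mathbf{O}^n]$ generated by the functions $\underline{a}\mapsto n(a_i)$ ($1\le i\le n$) and $\underline{a}\mapsto\mathrm{tr}(w(a_1,\ldots,a_n))$ for all non-empty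 non-associative words $w$ in $n$ letters. $S_n$ is the set consisting of $\underline{a}\mapsto n(a_i)$ ($1\le i\le n$) and $\underline{a}\mapsto\mathrm{tr}((\cdots((a_{i_1}a_{i_2})a_{i_3})\cdots)a_{i_k})$ for all $k\ge 1$ and $1\le i_1<\cdots<i_k\le n$. *)

From HB Require Import structures.
From mathcomp Require Import all_boot all_order all_algebra.
From mathcomp Require Import mpoly.
Set Implicit Arguments. Unset Strict Implicit. Unset Printing Implicit Defensive.
Import GRing.Theory.
Local Open Scope ring_scope.

(* Split octonions over a commutative ring R, in Zorn vector-matrix form:
   a = [[alpha, u], [v, beta]] with alpha, beta in R, u, v in R^3. *)
Definition vec3 (R : Type) := (R * R * R)%type.

Section Oct.
Variable R : comRingType.

Definition dot3 (x y : vec3 R) : R :=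
  let: (x1, x2, x3) := x in let: (y1, y2, y3) := y in x1 * y1 + x2 * y2 + x3 * y3.
Definition cross3 (x y : vec3 R) : vec3 R :=
  let: (x1, x2, x3) := x in let: (y1, y2, y3) := y in
  (x2 * y3 - x3 * y2, x3 * y1 - x1 * y3, x1 * y2 - x2 * y1).
Definition add3 (x y : vec3 R) : vec3 R :=
  let: (x1, x2, x3) := x in let: (y1, y2, y3) := y in (x1 + y1, x2 + y2, x3 + y3).
Definition opp3 (x : vec3 R) : vec3 R :=
  let: (x1, x2, x3) := x in (- x1, - x2, - x3).
Definition scale3 (c : R) (x : vec3 R) : vec3 R :=
  let: (x1, x2, x3) := x in (c * x1, c * x2, c * x3).

Record oct := Oct { oalpha : R; ou : vec3 R; ov : vec3 R; obeta : R }.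

Definition omul (a b : oct) : oct :=
  Oct (oalpha a * oalpha b + dot3 (ou a) (ov b))
      (add3 (add3 (scale3 (oalpha a) (ou b)) (scale3 (obeta b) (ou a)))
            (opp3 (cross3 (ov a) (ov b))))
      (add3 (add3 (scale3 (oalpha b) (ov a)) (scale3 (obeta a) (ov b)))
            (cross3 (ou a) (ou b)))
      (obeta a * obeta b + dot3 (ov a) (ou b)).

Definition otr (a : oct) : R := oalpha a + obeta a.
Definition onorm (a : oct) : R := oalpha a * obeta a - dot3 (ou a) (ov a).
End Oct.

Inductive word (n : nat) : Type :=
| WLetter of 'I_n
| WMul of word n & word n.

Fixpoint eval_word (R : comRingType) (n : nat) (a : 'I_n -> oct R) (w : word n)
  : oct R :=
  match w with
  | WLetter i => a i
  | WMul w1 w2 => omul (eval_word a w1) (eval_word a w2)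
  end.

(* The polynomial ring F[O^n]: coordinate functions of a_1..a_n, i.e.
   8n variables; variable (i,k) is the k-th coordinate of a_i, with
   coordinates ordered alpha, u1, u2, u3, v1, v2, v3, beta. *)
Section Generic.
Variables (F : fieldType) (n : nat).

Definition coordX (i : 'I_n) (k : nat) : {mpoly F[n * 8]} :=
  'X_(mxvec_index i (inord k : 'I_8)).

Definition generic_oct (i : 'I_n) : oct {mpoly F[n * 8]} :=
  Oct (coordX i 0) (coordX i 1, coordX i 2, coordX i 3)
      (coordX i 4, coordX i 5, coordX i 6) (coordX i 7).

Inductive gen_alg (G : {mpoly F[n * 8]} -> Prop) : {mpoly F[n * 8]} -> Prop :=
| gen_alg_gen p : G p -> gen_alg G p
| gen_alg_const (c : F) : gen_alg G c%:MP
| gen_alg_add p q : gen_alg G p -> gen_alg G q -> gen_alg G (p + q)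
| gen_alg_mul p q : gen_alg G p -> gen_alg G q -> gen_alg G (p * q).

Definition T_gens (p : {mpoly F[n * 8]}) : Prop :=
  (exists i : 'I_n, p = onorm (generic_oct i)) \/
  (exists w : word n, p = otr (eval_word generic_oct w)).

Definition T_alg := gen_alg T_gens.

Definition left_normed (i1 : 'I_n) (s : seq 'I_n) : oct {mpoly F[n * 8]} :=
  foldl (fun acc j => omul acc (generic_oct j)) (generic_oct i1) s.

Definition S_set (p : {mpoly F[n * 8]}) : Prop :=
  (exists i : 'I_n, p = onorm (generic_oct i)) \/
  (exists (i1 : 'I_n) (s : seq 'I_n),
      sorted (fun i j : 'I_n => (i < j)%N) (i1 :: s) /\
      p = otr (left_normed i1 s)).
End Generic.

From mathcomp Require Import all_boot all_order all_algebra.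
From mathcomp Require Import mpoly.
From mathcomp Require Import ring zify.
Set Implicit Arguments. Unset Strict Implicit. Unset Printing Implicit Defensive.
Import GRing.Theory.
Local Open Scope ring_scope.

(* Generation: let C be the algebra generated by S_n and M the C-span of 1 and of the
   increasing left-normed products a_i1 ... a_ik.  Using only identities of a
   quadratic alternative algebra (x^2 = tr(x) x - n(x) 1, its linearization, and the
   linearized alternative laws), M is stable under left and right multiplication by
   every a_j, hence by every word w, so tr(w) = tr(1 w) lies in tr(M), which is in C.
   Minimality: for each p in S_n, specialize the a_i to octonions over
   F[s, t_0, ..., t_(n-1)] so that, in characteristic 2 where tr(1) = 0, the images
   of all other elements of S_n are supported in a monoid of monomials that misses a
   monomial of the image of p; then p is not in the algebra they generate.
   Characteristic 2 is only used for minimality. *)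

Section OctonionIdentities.
Variable R : comRingType.
Implicit Types (c : R) (x y z : oct R).

Definition ozero : oct R := Oct 0 (0, 0, 0) (0, 0, 0) 0.
Definition oone : oct R := Oct 1 (0, 0, 0) (0, 0, 0) 1.
Definition oadd x y : oct R :=
  Oct (oalpha x + oalpha y) (add3 (ou x) (ou y)) (add3 (ov x) (ov y)) (obeta x + obeta y).
Definition oscale c x : oct R :=
  Oct (c * oalpha x) (scale3 c (ou x)) (scale3 c (ov x)) (c * obeta x).

Local Ltac oct_ring :=
  repeat match goal with x : oct _ |- _ => destruct x as [? [[? ?] ?] [[? ?] ?] ?] end;
  rewrite /omul /oadd /oscale /oone /ozero /otr /onorm /dot3 /cross3 /add3 /scale3 /opp3 /=;
  try congr Oct; try congr (_, _, _); ring.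

Lemma omulDl x y z : omul (oadd x y) z = oadd (omul x z) (omul y z). Proof. oct_ring. Qed.
Lemma omulDr x y z : omul x (oadd y z) = oadd (omul x y) (omul x z). Proof. oct_ring. Qed.
Lemma omulZl c x y : omul (oscale c x) y = oscale c (omul x y). Proof. oct_ring. Qed.
Lemma omulZr c x y : omul x (oscale c y) = oscale c (omul x y). Proof. oct_ring. Qed.
Lemma omul1l x : omul oone x = x. Proof. oct_ring. Qed.
Lemma omul1r x : omul x oone = x. Proof. oct_ring. Qed.
Lemma omul0l x : omul ozero x = ozero. Proof. oct_ring. Qed.
Lemma omul0r x : omul x ozero = ozero. Proof. oct_ring. Qed.
Lemma oscale1 x : oscale 1 x = x. Proof. oct_ring. Qed.
Lemma oscaleA c1 c2 x : oscale c1 (oscale c2 x) = oscale (c1 * c2) x. Proof. oct_ring. Qed.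

Lemma otrD x y : otr (oadd x y) = otr x + otr y. Proof. oct_ring. Qed.
Lemma otrZ c x : otr (oscale c x) = c * otr x. Proof. oct_ring. Qed.
Lemma otr0 : otr ozero = 0. Proof. oct_ring. Qed.
Lemma otr1 : otr oone = 1 + 1. Proof. by []. Qed.
Lemma onorm0 : onorm ozero = 0. Proof. oct_ring. Qed.
Lemma otrC x y : otr (omul x y) = otr (omul y x). Proof. oct_ring. Qed.

Lemma omul_sqr x : omul x x = oadd (oscale (otr x) x) (oscale (- onorm x) oone).
Proof. oct_ring. Qed.

Lemma omul_sqr_lin x y :
  oadd (omul x y) (omul y x) =
  oadd (oadd (oscale (otr x) y) (oscale (otr y) x))
       (oscale (otr (omul x y) - otr x * otr y) oone).
Proof. oct_ring. Qed.

Lemma omulC_tr x y :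
  omul x y =
  oadd (oadd (oadd (oscale (otr x) y) (oscale (otr y) x))
             (oscale (otr (omul x y) - otr x * otr y) oone))
       (oscale (-1) (omul y x)).
Proof. oct_ring. Qed.

Lemma omul_right_alt x y : omul (omul x y) y = omul x (omul y y).
Proof. oct_ring. Qed.

Lemma omul_left_alt_lin x y z :
  omul x (omul y z) =
  oadd (oadd (omul (omul x y) z) (omul (omul y x) z)) (oscale (-1) (omul y (omul x z))).
Proof. oct_ring. Qed.

Lemma omul_right_alt_lin x y z :
  omul (omul x y) z =
  oadd (oscale (-1) (omul (omul x z) y)) (omul x (oadd (omul y z) (omul z y))).
Proof. oct_ring. Qed.

End OctonionIdentities.

Definition ord_lt n : rel 'I_n := fun i j => (i < j)%N.
Definition ord_gt n : rel 'I_n := fun i j => (j < i)%N.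

Lemma ord_lt_trans n : transitive (@ord_lt n).
Proof. by move=> j i k; exact: ltn_trans. Qed.
Lemma ord_lt_irr n : irreflexive (@ord_lt n).
Proof. by move=> i; rewrite /ord_lt ltnn. Qed.
Lemma ord_gt_trans n : transitive (@ord_gt n).
Proof. by move=> j i k hij hjk; exact: ltn_trans hjk hij. Qed.

Section GeneratedAlgebra.
Variables (F : fieldType) (n : nat).
Implicit Types (G H : {mpoly F[n * 8]} -> Prop) (p q : {mpoly F[n * 8]}).

Lemma gen_alg1 G : gen_alg G 1.
Proof. by rewrite -mpolyC1; exact: gen_alg_const. Qed.

Lemma gen_algN G p : gen_alg G p -> gen_alg G (- p).
Proof.
move=> hp; rewrite -mulN1r -mpolyC1 -mpolyCN.
by apply: gen_alg_mul => //; exact: gen_alg_const.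
Qed.

Lemma gen_algB G p q : gen_alg G p -> gen_alg G q -> gen_alg G (p - q).
Proof. by move=> hp hq; apply: gen_alg_add => //; exact: gen_algN. Qed.

Lemma gen_alg_sub G H :
  (forall p, G p -> gen_alg H p) -> forall p, gen_alg G p -> gen_alg H p.
Proof.
move=> GH p; elim=> {p} [p /GH //|c|p q _ hp _ hq|p q _ hp _ hq].
- exact: gen_alg_const.
- exact: gen_alg_add.
- exact: gen_alg_mul.
Qed.

End GeneratedAlgebra.

Section Generation.
Variables (F : fieldType) (n : nat).
Local Notation a := (@generic_oct F n).
Local Notation C := (gen_alg (@S_set F n)).
Local Notation oct_n := (oct {mpoly F[n * 8]}).

(* [lprod [:: k_r; ...; k_1]] is the left-normed product ((a k_1 a k_2) ...) a k_r:
   the list is read from its last factor backwards. *)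
Fixpoint lprod (L : seq 'I_n) : oct_n :=
  if L is k :: L' then omul (lprod L') (a k) else oone _.

Inductive lspan (b : nat) : oct_n -> Prop :=
| lspan_lprod L : sorted (@ord_gt n) L -> all (fun i : 'I_n => (i < b)%N) L ->
    lspan b (lprod L)
| lspan_add x y : lspan b x -> lspan b y -> lspan b (oadd x y)
| lspan_scale c x : C c -> lspan b x -> lspan b (oscale c x).

Lemma C_otr_a j : C (otr (a j)).
Proof. by apply: gen_alg_gen; right; exists j, [::]. Qed.

Lemma C_onorm_a j : C (onorm (a j)).
Proof. by apply: gen_alg_gen; left; exists j. Qed.

Lemma C_otr_aa (j k : 'I_n) : (j < k)%N -> C (otr (omul (a j) (a k))).
Proof. by move=> jk; apply: gen_alg_gen; right; exists j, [:: k]; rewrite /= andbT. Qed.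

Lemma lprod_rev L : lprod L = foldl (fun acc j => omul acc (a j)) (oone _) (rev L).
Proof. by elim: L => //= k L IH; rewrite rev_cons foldl_rcons IH. Qed.

Lemma C_otr_lprod L : sorted (@ord_gt n) L -> C (otr (lprod L)).
Proof.
rewrite lprod_rev -(revK L) rev_sorted revK.
case: (rev L) => [|i1 s] sL; first by rewrite otr1; apply: gen_alg_add; exact: gen_alg1.
by apply: gen_alg_gen; right; exists i1, s; rewrite /= omul1l.
Qed.

Lemma lspan_otr b x : lspan b x -> C (otr x).
Proof.
elim=> {x} [L sL _|x y _ hx _ hy|c x hc _ hx]; first exact: C_otr_lprod.
- by rewrite otrD; apply: gen_alg_add.
- by rewrite otrZ; apply: gen_alg_mul.
Qed.

Lemma lspan_mono b b' x : (b <= b')%N -> lspan b x -> lspan b' x.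
Proof.
move=> bb'; elim=> {x} [L sL bL|x y _ hx _ hy|c x hc _ hx].
- apply: lspan_lprod => //; apply/allP => i /(allP bL) ib; exact: leq_trans ib bb'.
- exact: lspan_add.
- exact: lspan_scale.
Qed.

Lemma lspan1 b : lspan b (oone _).
Proof. exact: (@lspan_lprod b [::]). Qed.

Lemma lspan_a b (j : 'I_n) : (j < b)%N -> lspan b (a j).
Proof.
by move=> jb; rewrite -(omul1l (a j)); apply: (@lspan_lprod b [:: j]); rewrite /= ?jb.
Qed.

Lemma lspan_mulr_a_max (k : 'I_n) y : lspan k y -> lspan k.+1 (omul y (a k)).
Proof.
elim=> {y} [L sL kL|x y _ hx _ hy|c x hc _ hx].
- apply: (@lspan_lprod _ (k :: L)).
    by rewrite /= (path_sortedE (@ord_gt_trans n)) sL andbT.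
  rewrite /= ltnSn; apply/allP => i /(allP kL); exact: ltnW.
- by rewrite omulDl; apply: lspan_add.
- by rewrite omulZl; apply: lspan_scale.
Qed.

Lemma lspan_opp b x : lspan b x -> lspan b (oscale (-1) x).
Proof. by apply: lspan_scale; rewrite -mpolyC1 -mpolyCN; exact: gen_alg_const. Qed.

(* (P a_k) a_j = - (P a_j) a_k + P (a_k a_j + a_j a_k) by the linearized right
   alternative law, and a_k a_j + a_j a_k is in C + C a_j + C a_k. *)
Lemma lspan_mulr_swap b (k j : 'I_n) P : (j < k)%N -> (k < b)%N ->
  lspan k (omul P (a j)) -> lspan b P -> lspan b (omul P (a k)) ->
  lspan b (omul (omul P (a k)) (a j)).
Proof.
move=> jk kb Pj P0 Pk.
rewrite omul_right_alt_lin omul_sqr_lin !omulDr !omulZr omul1r.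
apply: lspan_add; first by apply: lspan_opp; apply: (lspan_mono kb); exact: lspan_mulr_a_max.
apply: lspan_add; first apply: lspan_add.
- by apply: lspan_scale; [exact: C_otr_a | exact: (lspan_mono (ltnW kb))].
- by apply: lspan_scale; [exact: C_otr_a | exact: Pk].
- apply: lspan_scale => //; apply: gen_algB; last by apply: gen_alg_mul; exact: C_otr_a.
  by rewrite otrC; exact: C_otr_aa.
Qed.

Lemma lspan_mulr_sqr b (k : 'I_n) P :
  lspan b P -> lspan b (omul P (a k)) -> lspan b (omul (omul P (a k)) (a k)).
Proof.
move=> P0 Pk; rewrite omul_right_alt omul_sqr omulDr !omulZr omul1r.
apply: lspan_add; apply: lspan_scale => //; first exact: C_otr_a.
by apply: gen_algN; exact: C_onorm_a.
Qed.

Lemma lspan_lprod_mulr L b (j : 'I_n) :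
  sorted (@ord_gt n) L -> all (fun i : 'I_n => (i < b)%N) L -> (j < b)%N ->
  lspan b (omul (lprod L) (a j)).
Proof.
elim: L b j => [|k L IH] b j sL bL jb.
  by apply: (@lspan_lprod b [:: j]); rewrite /= ?jb.
move: sL bL; rewrite /= (path_sortedE (@ord_gt_trans n)) => /andP [kL sL] /andP [kb bL].
have P0 : lspan b (lprod L).
  by apply: lspan_lprod => //; apply/allP => i /(allP kL) ik; exact: ltn_trans ik kb.
have Pk : lspan b (lprod (k :: L)).
  by apply: lspan_lprod; rewrite /= ?kb // (path_sortedE (@ord_gt_trans n)) kL.
case: (ltngtP j k) => [jk|kj|/val_inj ->]; last exact: lspan_mulr_sqr.
- exact: lspan_mulr_swap (IH _ _ sL kL jk) P0 Pk.
- apply: (@lspan_lprod _ [:: j, k & L]); last by rewrite /= jb kb.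
  by rewrite /= (path_sortedE (@ord_gt_trans n)) kL sL !andbT; exact: kj.
Qed.

Lemma lspan_mulr_a x j : lspan n x -> lspan n (omul x (a j)).
Proof.
elim=> {x} [L sL nL|x y _ hx _ hy|c x hc _ hx]; first exact: lspan_lprod_mulr.
- by rewrite omulDl; apply: lspan_add.
- by rewrite omulZl; apply: lspan_scale.
Qed.

Lemma lspan_mull_a x j : lspan n x -> lspan n (omul (a j) x).
Proof.
move=> hx; rewrite omulC_tr; apply: lspan_add; last by apply: lspan_opp; exact: lspan_mulr_a.
apply: lspan_add; first apply: lspan_add.
- by apply: lspan_scale; [exact: C_otr_a | done].
- by apply: lspan_scale; [exact: lspan_otr hx | exact: lspan_a].
- apply: lspan_scale; last exact: lspan1.
  apply: gen_algB; last by apply: gen_alg_mul; [exact: C_otr_a | exact: lspan_otr hx].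
  by rewrite otrC; exact: lspan_otr (lspan_mulr_a j hx).
Qed.

Definition lspan_stable (y : oct_n) :=
  (forall x, lspan n x -> lspan n (omul x y)) /\ (forall x, lspan n x -> lspan n (omul y x)).

Lemma lspan_stable_mul y z : lspan_stable y -> lspan_stable z -> lspan_stable (omul y z).
Proof.
move=> [yr yl] [zr zl]; split=> x hx.
- rewrite omul_left_alt_lin; apply: lspan_add; first apply: lspan_add.
  + by apply: zr; apply: yr.
  + by apply: zr; apply: yl.
  + by apply: lspan_opp; apply: yl; apply: zr.
- rewrite omul_right_alt_lin; apply: lspan_add.
  + by apply: lspan_opp; apply: zr; apply: yl.
  + rewrite omulDr; apply: lspan_add; apply: yl; [apply: zl | apply: zr] => //.
Qed.

Lemma lspan_stable_word (w : word n) : lspan_stable (eval_word a w).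
Proof.
elim: w => [j|w1 h1 w2 h2] /=; last exact: lspan_stable_mul.
by split=> x hx; [exact: lspan_mulr_a | exact: lspan_mull_a].
Qed.

Lemma C_otr_word (w : word n) : C (otr (eval_word a w)).
Proof.
apply: (@lspan_otr n); rewrite -(omul1l (eval_word a w)).
exact: (lspan_stable_word w).1 _ (lspan1 n).
Qed.

Lemma left_normed_word (i1 : 'I_n) (s : seq 'I_n) :
  left_normed F i1 s = eval_word a (foldl (fun w j => WMul w (WLetter j)) (WLetter i1) s).
Proof.
rewrite /left_normed -[a i1]/(eval_word a (WLetter i1)).
by elim: s (WLetter i1) => //= j s IH w; exact: IH (WMul w (WLetter j)).
Qed.

Lemma S_set_T_gens (p : {mpoly F[n * 8]}) : S_set p -> T_gens p.
Proof.
case=> [[i ->]|[i1 [s [_ ->]]]]; first by left; exists i.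
by right; eexists; rewrite left_normed_word.
Qed.

Lemma T_alg_gen_S (p : {mpoly F[n * 8]}) : T_alg p <-> gen_alg (@S_set F n) p.
Proof.
split; apply: gen_alg_sub => {}p.
- by case=> [[i ->]|[w ->]]; [exact: C_onorm_a | exact: C_otr_word].
- by move/S_set_T_gens; exact: gen_alg_gen.
Qed.

End Generation.

Definition map3 (A B : Type) (f : A -> B) (x : vec3 A) : vec3 B :=
  let: (x1, x2, x3) := x in (f x1, f x2, f x3).
Definition map_oct (A B : comRingType) (f : A -> B) (x : oct A) : oct B :=
  Oct (f (oalpha x)) (map3 f (ou x)) (map3 f (ov x)) (f (obeta x)).

Section MapOct.
Variables (A B : comRingType) (f : {rmorphism A -> B}).

Lemma map_omul (x y : oct A) : map_oct f (omul x y) = omul (map_oct f x) (map_oct f y).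
Proof.
case: x => ? [[? ?] ?] [[? ?] ?] ?; case: y => ? [[? ?] ?] [[? ?] ?] ?.
by rewrite /omul /map_oct /= /dot3 /cross3 /add3 /scale3 /opp3 /=
  !(rmorphD, rmorphM, rmorphB, rmorphN).
Qed.

Lemma map_otr (x : oct A) : f (otr x) = otr (map_oct f x).
Proof. by case: x => ? ? ? ?; rewrite /otr rmorphD. Qed.

Lemma map_onorm (x : oct A) : f (onorm x) = onorm (map_oct f x).
Proof.
by case: x => ? [[? ?] ?] [[? ?] ?] ?; rewrite /onorm /dot3 /= rmorphB !rmorphD !rmorphM.
Qed.

End MapOct.

Section LeftNormedZero.
Variables (R : comRingType) (n : nat) (val : 'I_n -> oct R).
Local Notation rmul := (fun acc j => omul acc (val j)).

Lemma foldl_omul0 s : foldl rmul (ozero R) s = ozero R.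
Proof. by elim: s => //= j s IH; rewrite omul0l. Qed.

Lemma foldl_omul_eq0 y s :
  (exists2 j, j \in s & val j = ozero R) -> foldl rmul y s = ozero R.
Proof.
elim: s y => [|j s IH] y [k] //; rewrite inE => /predU1P [-> vk|ks vk] /=.
  by rewrite vk omul0r foldl_omul0.
by apply: IH; exists k.
Qed.

End LeftNormedZero.

Section Evaluation.
Variables (F : fieldType) (S : comRingType) (c : {rmorphism F -> S}) (n : nat).
Variable val : 'I_n -> oct S.

Definition ocoord (x : oct S) (k : nat) : S :=
  nth 0 [:: oalpha x; (ou x).1.1; (ou x).1.2; (ou x).2;
            (ov x).1.1; (ov x).1.2; (ov x).2; obeta x] k.

Definition oeval_var (idx : 'I_(n * 8)) : S :=
  mxvec (\matrix_(i < n, k < 8) ocoord (val i) k) 0 idx.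

Local Notation oeval := (mmap c oeval_var).

Lemma oeval_coordX i k : (k < 8)%N -> oeval (coordX F i k) = ocoord (val i) k.
Proof. by move=> k8; rewrite /coordX mmapX mmap1U /oeval_var mxvecE mxE inordK. Qed.

Lemma oeval_generic_oct i : map_oct oeval (generic_oct F i) = val i.
Proof.
rewrite /map_oct /generic_oct /= !oeval_coordX //.
by case: (val i) => ? [[? ?] ?] [[? ?] ?] ?.
Qed.

Lemma oeval_onorm i : oeval (onorm (generic_oct F i)) = onorm (val i).
Proof. by rewrite map_onorm oeval_generic_oct. Qed.

Lemma oeval_otr_left_normed i1 s :
  oeval (otr (left_normed F i1 s)) = otr (foldl (fun acc j => omul acc (val j)) (val i1) s).
Proof.
rewrite map_otr /left_normed -(oeval_generic_oct i1).
by elim: s (generic_oct F i1) => //= j s IH x; rewrite IH map_omul oeval_generic_oct.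
Qed.

End Evaluation.

Notation oeval c val := (mmap c (oeval_var val)).

Section MonomialSupport.
Variables (F : fieldType) (n k : nat).

Definition mnm_submonoid (M : pred 'X_{1..k}) :=
  0%MM \in M /\ {in M &, forall m1 m2, (m1 + m2)%MM \in M}.

Lemma gen_alg_msupp (f : {rmorphism {mpoly F[n * 8]} -> {mpoly F[k]}})
    (G : {mpoly F[n * 8]} -> Prop) (M : pred 'X_{1..k}) :
  (forall c, f c%:MP = c%:MP) -> mnm_submonoid M ->
  (forall q, G q -> {subset msupp (f q) <= M}) ->
  forall q, gen_alg G q -> {subset msupp (f q) <= M}.
Proof.
move=> fC [M0 MD] GM q; elim=> {q} [q /GM //|c|p q _ hp _ hq|p q _ hp _ hq] m.
- by rewrite fC msuppC; case: (c == 0) => //; rewrite inE => /eqP ->.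
- by rewrite rmorphD => /msuppD_le; rewrite mem_cat => /orP [/hp|/hq].
- rewrite rmorphM => /msuppM_le /allpairsP [[m1 m2] /= [/hp m1M /hq m2M ->]].
  exact: MD.
Qed.

Lemma msuppX_subset (m : 'X_{1..k}) (M : pred 'X_{1..k}) :
  {subset msupp ('X_[m] : {mpoly F[k]}) <= M} <-> m \in M.
Proof. by rewrite msuppX; split=> [/(_ m (mem_head _ _))|mM m'] // /[!inE] /eqP ->. Qed.

End MonomialSupport.

Section Separation.
Variables (F : fieldType) (n : nat).
Local Notation P := {mpoly F[n.+1]}.
Local Notation a := (@generic_oct F n).
Local Notation oevalP val := (oeval (@mpolyC n.+1 F) val).
Local Notation rmul val := (fun acc j => omul acc (val j)).

Definition separates (p : {mpoly F[n * 8]}) (val : 'I_n -> oct P) (M : pred 'X_{1..n.+1}) :=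
  [/\ mnm_submonoid M,
      forall q, S_set q -> q <> p -> {subset msupp (oevalP val q) <= M}
    & ~ {subset msupp (oevalP val p) <= M}].

Lemma separates_not_gen_alg p val M (G : {mpoly F[n * 8]} -> Prop) :
  separates p val M -> (forall q, G q -> S_set q) -> ~ G p -> ~ gen_alg G p.
Proof.
case=> sM GM notMp GS nGp /(gen_alg_msupp _ sM) Mp.
apply/notMp/Mp => [c|q Gq]; first exact: mmapC.
by apply: GM; [exact: GS | by move=> qp; apply: nGp; rewrite -qp].
Qed.

(* The images live in F[s, t_0, ..., t_(n-1)], with s the last variable. *)
Definition svar : P := 'X_ord_max.
Definition tindex (j : 'I_n) : 'I_n.+1 := widen_ord (leqnSn n) j.
Definition tvar (j : 'I_n) : P := 'X_(tindex j).

Lemma tindex_eq (j k : 'I_n) : (tindex j == tindex k) = (j == k).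
Proof. by rewrite -val_eqE /= val_eqE. Qed.

Lemma tindex_max (j : 'I_n) : (tindex j == ord_max) = false.
Proof. by apply/negbTE; rewrite -val_eqE /= neq_ltn ltn_ord. Qed.

Lemma pred1_mnm_submonoid : mnm_submonoid (pred1 (0%MM : 'X_{1..n.+1})).
Proof. by split=> [|m1 m2]; rewrite !inE // => /eqP -> /eqP ->; rewrite addm0. Qed.

Definition osingle (i0 : 'I_n) (x : oct P) (j : 'I_n) : oct P :=
  if j == i0 then x else ozero P.

Lemma osingle_left_normed i0 x j1 r :
  sorted (@ord_lt n) (j1 :: r) -> (j1, r) != (i0, [::]) ->
  foldl (rmul (osingle i0 x)) (osingle i0 x j1) r = ozero P.
Proof.
rewrite /osingle; have [-> /= | _ _ _] := eqVneq j1 i0; last exact: foldl_omul0.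
case: r => [|j2 r] /=; first by rewrite eqxx.
move=> /andP [i0j2 _] _; have [j2i0|_] := eqVneq j2 i0.
  by move: i0j2; rewrite j2i0 ord_lt_irr.
by rewrite omul0r foldl_omul0.
Qed.

Lemma oeval_osingle i0 x q : S_set q ->
  [\/ oevalP (osingle i0 x) q = 0,
      q = onorm (a i0) /\ oevalP (osingle i0 x) q = onorm x
    | q = otr (a i0) /\ oevalP (osingle i0 x) q = otr x].
Proof.
case=> [[j ->]|[j1 [r [sr ->]]]]; rewrite ?oeval_onorm ?oeval_otr_left_normed.
  by rewrite /osingle; case: eqVneq => [->|_]; [apply: Or32 | rewrite onorm0; apply: Or31].
have [[-> ->]|ne] := eqVneq (j1, r) (i0, [::]).
  by apply: Or33; rewrite /= /osingle eqxx.
by apply: Or31; rewrite osingle_left_normed // otr0.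
Qed.

Lemma not_msuppX_pred1 (m : 'X_{1..n.+1}) : m != 0%MM ->
  ~ {subset msupp ('X_[m] : P) <= pred1 0%MM}.
Proof. by move=> m0 /msuppX_subset; rewrite inE (negbTE m0). Qed.

Hypothesis pchar2 : (2 \in [pchar F])%N.

Lemma mpoly_add11_eq0 : (1 + 1 : P) = 0.
Proof. exact: pcharf0 (rmorph_pchar (@mpolyC n.+1 F) pchar2). Qed.

Lemma separates_onorm i0 :
  separates (onorm (a i0)) (osingle i0 (oscale svar (oone P))) (pred1 0%MM).
Proof.
split=> [|q Sq qp|]; first exact: pred1_mnm_submonoid.
  case: (oeval_osingle i0 (oscale svar (oone P)) Sq) => [->|[//]|[_ ->]].
  - by rewrite msupp0.
  - by rewrite otrZ otr1 mpoly_add11_eq0 mulr0 msupp0.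
rewrite oeval_onorm /osingle eqxx.
have -> : onorm (oscale svar (oone P)) = 'X_[U_(ord_max) + U_(ord_max)].
  by rewrite mpolyXD /onorm /dot3 /svar /=; ring.
by apply: not_msuppX_pred1; rewrite mnmD_eq0 andbb mnm1_eq0.
Qed.

Definition oe11 : oct P := Oct 1 (0, 0, 0) (0, 0, 0) 0.

Lemma separates_otr_a i0 :
  separates (otr (a i0)) (osingle i0 (oscale svar oe11)) (pred1 0%MM).
Proof.
split=> [|q Sq qp|]; first exact: pred1_mnm_submonoid.
  case: (oeval_osingle i0 (oscale svar oe11) Sq) => [->|[_ ->]|[//]].
  - by rewrite msupp0.
  - by rewrite /onorm /dot3 /= !(mulr0, mul0r, addr0, subr0) msupp0.
rewrite (oeval_otr_left_normed _ _ i0 [::]) /osingle eqxx.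
have -> : otr (oscale svar oe11) = 'X_[U_(ord_max)] by rewrite otrZ /otr /= addr0 mulr1.
by apply: not_msuppX_pred1; rewrite mnm1_eq0.
Qed.

End Separation.

Section LongTraceSeparation.
Variables (F : fieldType) (n : nat).
Hypothesis pchar2 : (2 \in [pchar F])%N.
Local Notation P := {mpoly F[n.+1]}.
Local Notation oevalP val := (oeval (@mpolyC n.+1 F) val).
Local Notation rmul val := (fun acc j => omul acc (val j)).
Local Notation svar := (@svar F n).
Local Notation tvar := (@tvar F n).

Variables (i1 i2 : 'I_n) (I' : seq 'I_n).
Hypothesis sI : sorted (@ord_lt n) [:: i1, i2 & I'].
Local Notation I := [:: i1, i2 & I'].

Definition ou1 : oct P := Oct 0 (1, 0, 0) (0, 0, 0) 0.
Definition ov1 : oct P := Oct 0 (0, 0, 0) (1, 0, 0) 0.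

(* [ou1], [ov1] and (in characteristic 2) [oone] are traceless, whereas
   [omul ou1 ov1] has trace 1: only [a i1 a i2] followed by scalars survives. *)
Definition oval_long (j : 'I_n) : oct P :=
  if j == i1 then oscale svar ou1 else if j == i2 then ov1
  else if j \in I' then oscale (tvar j) (oone P) else ozero P.

Definition tvar_prod (L : seq 'I_n) : P := 'X_[\big[+%MM/0%MM]_(j <- L) U_(tindex j)%MM].

Lemma i1_lt_i2 : (i1 < i2)%N.
Proof. by case/andP: sI. Qed.

Lemma i2_lt_I' : all (@ord_lt n i2) I'.
Proof. by move: sI; rewrite /= (path_sortedE (@ord_lt_trans n)) => /and3P []. Qed.

Lemma sorted_I' : sorted (@ord_lt n) I'.
Proof. by move: sI; rewrite /= (path_sortedE (@ord_lt_trans n)) => /and3P []. Qed.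

Lemma in_I'_gt x : x \in I' -> (i2 < x)%N.
Proof. exact: (allP i2_lt_I'). Qed.

Lemma in_I'_of_gt (b : 'I_n) r : (i2 <= b)%N -> all (@ord_lt n b) r ->
  all (mem I) r -> all (mem I') r.
Proof.
move=> i2b /allP br /allP rI; apply/allP => x xr.
have i2x : (i2 < x)%N := leq_ltn_trans i2b (br x xr).
move: (rI x xr); rewrite !inE => /predU1P [xi1|/predU1P [xi2|//]].
- by move: i2x; rewrite xi1 ltnNge (ltnW i1_lt_i2).
- by move: i2x; rewrite xi2 ltnn.
Qed.

Lemma oval_i1 : oval_long i1 = oscale svar ou1.
Proof. by rewrite /oval_long eqxx. Qed.

Lemma oval_i2 : oval_long i2 = ov1.
Proof. by rewrite /oval_long eqxx; case: eqVneq => // e; move: i1_lt_i2; rewrite e ltnn. Qed.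

Lemma oval_I' j : j \in I' -> oval_long j = oscale (tvar j) (oone P).
Proof.
move=> jI; have := in_I'_gt jI; rewrite /oval_long jI.
case: eqVneq => [-> /(ltn_trans i1_lt_i2)|_]; first by rewrite ltnn.
by case: eqVneq => [->|//]; rewrite ltnn.
Qed.

Lemma oval_notin j : j \notin I -> oval_long j = ozero P.
Proof.
by rewrite !inE negb_or negb_or /oval_long => /and3P [/negbTE -> /negbTE -> /negbTE ->].
Qed.

Lemma foldl_oval_I' L y :
  all (mem I') L -> foldl (rmul oval_long) y L = oscale (tvar_prod L) y.
Proof.
elim: L y => [|j L IH] y /=; first by rewrite /tvar_prod big_nil mpolyX0 oscale1.
case/andP=> jI LI; rewrite IH // oval_I' // omulZr omul1r oscaleA.
by rewrite /tvar_prod big_cons mpolyXD mulrC.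
Qed.

Lemma otr_oval_long j1 r : sorted (@ord_lt n) (j1 :: r) ->
  otr (foldl (rmul oval_long) (oval_long j1) r) = 0 \/
  exists r', [/\ j1 = i1, r = i2 :: r', all (mem I') r'
               & otr (foldl (rmul oval_long) (oval_long j1) r) = svar * tvar_prod r'].
Proof.
rewrite /= (path_sortedE (@ord_lt_trans n)) => /andP [j1r sr].
have [/hasP [x xJ xI]|] := boolP (has [predC I] (j1 :: r)).
  left; move: xJ; rewrite inE => /predU1P [<-|xr].
    by rewrite oval_notin // foldl_omul0 otr0.
  by rewrite foldl_omul_eq0 ?otr0 //; exists x => //; exact: oval_notin.
rewrite has_predC negbK /= => /andP [j1I rI].
have [e1|ne1] := eqVneq j1 i1.
  subst j1; case: r j1r sr rI => [|x r'] /=.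
    by left; rewrite oval_i1 otrZ /otr /= addr0 mulr0.
  case/andP=> i1x _; rewrite (path_sortedE (@ord_lt_trans n)).
  move=> /andP [xr' _] /andP [xI r'I].
  have [ex|ne2] := eqVneq x i2.
    subst x; have r'I' : all (mem I') r' by exact: in_I'_of_gt (leqnn _) xr' r'I.
    right; exists r'; split=> //.
    rewrite oval_i1 oval_i2 foldl_oval_I' // otrZ omulZl otrZ.
    by rewrite /otr /= !(mulr0, mul0r, mulr1, addr0, add0r) mulrC.
  have xI' : x \in I'.
    by move: xI; rewrite !inE (negbTE ne2) => /predU1P [e|//]; move: i1x; rewrite e ord_lt_irr.
  have r'I' : all (mem I') r' := in_I'_of_gt (ltnW (in_I'_gt xI')) xr' r'I.
  left; rewrite oval_i1 foldl_oval_I' // oval_I' // omulZr omul1r !otrZ.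
  by rewrite /otr /= addr0 !mulr0.
have j1_ge : (i2 <= j1)%N.
  by move: j1I; rewrite !inE (negbTE ne1) => /predU1P [->|/in_I'_gt /ltnW].
rewrite foldl_oval_I' ?(in_I'_of_gt j1_ge) // otrZ; left.
have [->|ne2] := eqVneq j1 i2; first by rewrite oval_i2 /otr /= addr0 mulr0.
rewrite oval_I'; last by move: j1I; rewrite !inE (negbTE ne1) (negbTE ne2).
by rewrite otrZ otr1 mpoly_add11_eq0 // !mulr0.
Qed.

Lemma onorm_oval_long j :
  onorm (oval_long j) = 0 \/ onorm (oval_long j) = 'X_[U_(tindex j) + U_(tindex j)].
Proof.
rewrite /oval_long; case: ifP => _; first by left; rewrite /onorm /dot3 /=; ring.
case: ifP => _; first by left; rewrite /onorm /dot3 /=; ring.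
case: ifP => _; last by left; exact: onorm0.
by right; rewrite mpolyXD /onorm /dot3 /tvar /=; ring.
Qed.

(* The monomials s^e t^d with e = 0 and all d_j even (j in I'), or e >= 2, or e = 1
   and some d_j even (j in I'): a monoid containing the images of all of S_n but
   the target, whose image is s * prod_(j in I') t_j. *)
Definition long_good (m : 'X_{1..n.+1}) : bool :=
  let even j := ~~ odd (m (tindex j)) in
  [|| (m ord_max == 0%N) && all even I', (1 < m ord_max)%N
    | (m ord_max == 1%N) && has even I'].

Lemma long_good_submonoid : mnm_submonoid long_good.
Proof.
split=> [|m1 m2]; rewrite !unfold_in /long_good /=.
  by rewrite mnm0E eqxx; apply/orP; left; apply/allP => j _; rewrite mnm0E.
rewrite !mnmDE.
case: (ltnP 1 (m1 ord_max + m2 ord_max)) => [|le1]; first by rewrite !orbT.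
case/or3P=> [/andP [/eqP s1 e1]|s1|/andP [/eqP s1 /hasP [j jI ej]]];
  case/or3P=> [/andP [/eqP s2 e2]|s2|/andP [/eqP s2 /hasP [k kI ek]]];
  rewrite ?s1 ?s2 /=; try (exfalso; lia).
- rewrite orbF; apply/allP => j jI; rewrite mnmDE oddD.
  by rewrite (negbTE (allP e1 j jI)) (negbTE (allP e2 j jI)).
- by apply/hasP; exists k => //; rewrite mnmDE oddD (negbTE (allP e1 k kI)).
- by apply/hasP; exists j => //; rewrite mnmDE oddD (negbTE (allP e2 j jI)) addbF.
Qed.

Definition long_mnm (L : seq 'I_n) : 'X_{1..n.+1} :=
  (U_(ord_max) + \big[+%MM/0%MM]_(j <- L) U_(tindex j))%MM.

Lemma long_monomial L : svar * tvar_prod L = 'X_[long_mnm L].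
Proof. by rewrite mpolyXD. Qed.

Lemma long_mnm_max L : long_mnm L ord_max = 1%N.
Proof.
by rewrite mnmDE mnm1E eqxx mnm_sumE big1_seq // => j _; rewrite mnm1E tindex_max.
Qed.

Lemma long_mnm_tindex L j : long_mnm L (tindex j) = count_mem j L.
Proof.
rewrite mnmDE mnm1E eq_sym tindex_max add0n mnm_sumE.
by elim: L => [|k L IH]; rewrite ?big_nil // big_cons IH mnm1E tindex_eq.
Qed.

Lemma separates_otr_long :
  separates (otr (left_normed F i1 (i2 :: I'))) oval_long long_good.
Proof.
split=> [|q [[j ->]|[j1 [r [sr ->]]]] qp|]; first exact: long_good_submonoid.
- rewrite oeval_onorm; case: (onorm_oval_long j) => ->; first by rewrite msupp0.
  apply/msuppX_subset; rewrite unfold_in /long_good mnmDE mnm1E tindex_max /=.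
  by apply/orP; left; apply/allP => k _; rewrite mnmDE addnn odd_double.
- rewrite oeval_otr_left_normed; case: (otr_oval_long sr) => [->|[r' [e1 er r'I ->]]].
    by rewrite msupp0.
  have {}qp : r' != I' by apply: contra_not_neq qp => e; rewrite e1 er e.
  rewrite long_monomial; apply/msuppX_subset; rewrite unfold_in /long_good.
  rewrite long_mnm_max /=; apply/hasP.
  have [sub|] := boolP (all (mem r') I'); last first.
    rewrite -has_predC => /hasP [j jI jr].
    by exists j => //; rewrite long_mnm_tindex (count_memPn jr).
  have sr' : sorted (@ord_lt n) r'.
    by move: sr; rewrite e1 er => /path_sorted /path_sorted.
  case/eqP: qp; apply: (irr_sorted_eq (@ord_lt_trans n) (@ord_lt_irr n) sr' sorted_I') => j.
  by apply/idP/idP => [/(allP r'I)|/(allP sub)].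
- rewrite oeval_otr_left_normed /= oval_i1 oval_i2 foldl_oval_I'; last exact/allP.
  rewrite otrZ omulZl otrZ /otr /= !(mulr0, mul0r, mulr1, addr0, add0r) mulrC long_monomial.
  move/msuppX_subset; rewrite unfold_in /long_good long_mnm_max /=.
  case/hasP=> j jI; rewrite long_mnm_tindex.
  have uI' := sorted_uniq (@ord_lt_trans n) (@ord_lt_irr n) sorted_I'.
  by rewrite (count_uniq_mem _ uI') jI.
Qed.

End LongTraceSeparation.

Lemma S_set_separated (F : fieldType) (n : nat) (pchar2 : (2 \in [pchar F])%N)
    (p : {mpoly F[n * 8]}) :
  S_set p -> exists val M, separates p val M.
Proof.
case=> [[i ->]|[i1 [[|i2 I'] [sI ->]]]]; do 2 eexists.
- exact: separates_onorm.
- exact: separates_otr_a.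
- exact: separates_otr_long.
Qed.

Unset Implicit Arguments. Set Strict Implicit. Set Printing Implicit Defensive.
Theorem theorem5p2 (F : closedFieldType) (hchar : (2 \in [pchar F])%N)
  (n : nat) (hn : (1 <= n)%N) :
  (forall p : {mpoly F[n * 8]}, T_alg p <-> gen_alg (S_set (F := F) (n := n)) p) /\
  (forall S : {mpoly F[n * 8]} -> Prop,
     (forall p, S p -> S_set p) ->
     (exists p, S_set p /\ ~ S p) ->
     ~ (forall p : {mpoly F[n * 8]}, T_alg p <-> gen_alg S p)).
Proof.
split=> [p|S SS [p [Sp nSp]] TS]; first exact: T_alg_gen_S.
have [val [M sep]] := S_set_separated hchar Sp.
apply: separates_not_gen_alg sep SS nSp _.
by apply/TS/T_alg_gen_S; exact: gen_alg_gen.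
Qed.
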